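(* Let $L$ be a language expanding the language of rings and containing a unary function symbol $E$, and let $T$ be an $L$-theory expanding the theory of fields of characteristic $0$ which proves $E(x+y) = E(x)\cdot E(y)$ and $\exists z\, E(z) \neq 1$. Let $\mathcal{K}^\delta$ be an existentially closed model of $T_M^\delta$ with domain $K$, and let $c \in K$. Define $\Gamma_c = \{(E(x), E(cx)) : x \in K\} \subseteq K^2$ and $\delta_c : \Gamma_c \to K^2$, $(y,z) \mapsto (\delta y, \delta z)$. Then $\delta_c$ is surjective if and only if $\Gamma_c$ is Zariski dense in $K^2$.
   Context: $\delta$ is a new unary function symbol; $T^\delta$ is $T$ together with the axioms $\delta(x+y) = \delta x + \delta y$ and $\delta(xy) = x\,\delta y + y\,\delta x$. $T_M$ denotes the Morleyization of $T$ (in the language $L_M$ having a new relation symbol for each $L$-formula, interpreted as that formula), and $T_M^\delta$ is $T_M$ together with the derivation axioms. A model $M$ of $T_M^\delta$ is existentially closed if for every quantifier-free $L_M^\delta$-formula $\phi(\bar x,\bar y)$ and tuple $\bar a$ from $M$, whenever some extension $B \supseteq M$ with $B \models T_M^\delta$ satisfies $\exists \bar x\,\phi(\bar x,\bar a)$, then $M \models \exists\bar x\,\phi(\bar x,\bar a)$. Zariski dense means not contained in the zero set of a nonzero polynomial. *)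

From HB Require Import structures.
From mathcomp Require Import all_boot all_order all_algebra.
From mathcomp Require Import mpoly.
Set Implicit Arguments. Unset Strict Implicit. Unset Printing Implicit Defensive.
Import Order.TTheory GRing.Theory Num.Theory.
Local Open Scope ring_scope.

(* A first-order language L expanding the language of rings {0,1,+,-,*}
   by a unary function symbol E: the remaining (extra) function and
   relation symbols, with arities, are given by a signature. *)
Record sig := Sig {
  fsym : Type; farity : fsym -> nat;
  rsym : Type; rarity : rsym -> nat }.

Section Syntax.
Variable S : sig.

Inductive lterm : Type :=
| LVar : nat -> lterm
| LZero : lterm
| LOne : lterm
| LAdd : lterm -> lterm -> lterm
| LOpp : lterm -> lterm
| LMul : lterm -> lterm -> lterm
| LExp : lterm -> lterm
| LApp : forall f : fsym S, ('I_(@farity S f) -> lterm) -> lterm.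

Inductive lform : Type :=
| FEq : lterm -> lterm -> lform
| FRel : forall r : rsym S, ('I_(@rarity S r) -> lterm) -> lform
| FFalse : lform
| FImp : lform -> lform -> lform
| FAnd : lform -> lform -> lform
| FOr : lform -> lform -> lform
| FAll : nat -> lform -> lform
| FEx : nat -> lform -> lform.

Inductive dterm : Type :=
| DVar : nat -> dterm
| DZero : dterm
| DOne : dterm
| DAdd : dterm -> dterm -> dterm
| DOpp : dterm -> dterm
| DMul : dterm -> dterm -> dterm
| DExp : dterm -> dterm
| DApp : forall f : fsym S, ('I_(@farity S f) -> dterm) -> dterm
| DDer : dterm -> dterm.

(* The atomic formula [QMor phi s]
   is the Morleyization relation symbol R_phi (one for each L-formula phi)
   applied to the L^delta-terms s 0, s 1, ... substituted for the
   variables of phi. *)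
Inductive qform : Type :=
| QEq : dterm -> dterm -> qform
| QMor : lform -> (nat -> dterm) -> qform
| QFalse : qform
| QNot : qform -> qform
| QAnd : qform -> qform -> qform
| QOr : qform -> qform -> qform.

End Syntax.

(* L-structures.  Since every theory considered expands the theory of
   fields, the carrier is taken to be a field with the ring symbols
   interpreted by the field operations. *)
Record struc (S : sig) := Struc {
  scar : fieldType;
  sE : scar -> scar;
  sF : forall f : fsym S, ('I_(@farity S f) -> scar) -> scar;
  sR : forall r : rsym S, ('I_(@rarity S r) -> scar) -> Prop }.

(* L^delta-structures: an L-structure with an interpretation of delta.
   (As L_M-structures, the Morleyization symbols R_phi are interpreted
   by phi, see [qsat].) *)
Record dstruc (S : sig) := DStruc {
  dbase : struc S;
  dder : scar dbase -> scar dbase }.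

Arguments scar {S} s.
Arguments sE {S} s _.
Arguments sF {S} s f _.
Arguments sR {S} s r _.
Arguments dbase {S} d.
Arguments dder {S} d _.

Definition upd {T : Type} (v : nat -> T) (i : nat) (a : T) : nat -> T :=
  fun j => if j == i then a else v j.

Section Semantics.
Variable S : sig.

Fixpoint leval (M : struc S) (v : nat -> scar M) (t : lterm S) : scar M :=
  match t with
  | LVar i => v i
  | LZero => 0
  | LOne => 1
  | LAdd a b => leval v a + leval v b
  | LOpp a => - leval v a
  | LMul a b => leval v a * leval v b
  | LExp a => sE M (leval v a)
  | LApp f args => sF M f (fun k => leval v (args k))
  end.

Fixpoint lsat (M : struc S) (v : nat -> scar M) (phi : lform S) : Prop :=
  match phi with
  | FEq a b => leval v a = leval v b
  | FRel r args => sR M r (fun k => leval v (args k))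
  | FFalse => False
  | FImp p q => lsat v p -> lsat v q
  | FAnd p q => lsat v p /\ lsat v q
  | FOr p q => lsat v p \/ lsat v q
  | FAll i p => forall a, lsat (upd v i a) p
  | FEx i p => exists a, lsat (upd v i a) p
  end.

Fixpoint deval (M : dstruc S) (v : nat -> scar (dbase M)) (t : dterm S)
  : scar (dbase M) :=
  match t with
  | DVar i => v i
  | DZero => 0
  | DOne => 1
  | DAdd a b => deval v a + deval v b
  | DOpp a => - deval v a
  | DMul a b => deval v a * deval v b
  | DExp a => sE (dbase M) (deval v a)
  | DApp f args => sF (dbase M) f (fun k => deval v (args k))
  | DDer a => dder M (deval v a)
  end.

Fixpoint qsat (M : dstruc S) (v : nat -> scar (dbase M)) (psi : qform S)
  : Prop :=
  match psi with
  | QEq a b => deval v a = deval v b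
  | QMor phi s => lsat (fun i => deval v (s i)) phi
  | QFalse => False
  | QNot p => ~ qsat v p
  | QAnd p q => qsat v p /\ qsat v q
  | QOr p q => qsat v p \/ qsat v q
  end.

(* M is a model of the L-theory T (a set of L-sentences; formulas are read
   as their universal closures). *)
Definition models (T : lform S -> Prop) (M : struc S) : Prop :=
  forall phi, T phi -> forall v : nat -> scar M, lsat v phi.

Definition is_derivation (M : dstruc S) : Prop :=
  (forall x y, dder M (x + y) = dder M x + dder M y) /\
  (forall x y, dder M (x * y) = x * dder M y + y * dder M x).

Definition models_TMd (T : lform S -> Prop) (M : dstruc S) : Prop :=
  models T (dbase M) /\ is_derivation M.

Definition lmd_embedding (M B : dstruc S)
    (h : scar (dbase M) -> scar (dbase B)) : Prop :=
  (forall x y, h (x + y) = h x + h y) /\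
  (forall x y, h (x * y) = h x * h y) /\
  (forall x, h (- x) = - h x) /\
  h 0 = 0 /\ h 1 = 1 /\
  (forall x, h (sE (dbase M) x) = sE (dbase B) (h x)) /\
  (forall f a, h (sF (dbase M) f a) = sF (dbase B) f (fun k => h (a k))) /\
  (forall x, h (dder M x) = dder B (h x)) /\
  (forall phi (v : nat -> scar (dbase M)),
      lsat v phi <-> lsat (fun i => h (v i)) phi).

(* M is an existentially closed model of T_M^delta: for every
   quantifier-free L_M^delta-formula psi, every finite list xs of
   (existentially quantified) variables and every assignment v of the
   parameters in M, if some extension B of M that is a model of T_M^delta
   satisfies (exists xs, psi) with parameters v, then so does M. *)
Definition ec_model (T : lform S -> Prop) (M : dstruc S) : Prop :=
  models_TMd T M /\
  forall (psi : qform S) (xs : seq nat) (v : nat -> scar (dbase M)),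
    (exists (B : dstruc S) (h : scar (dbase M) -> scar (dbase B)),
        models_TMd T B /\ lmd_embedding h /\
        exists w : nat -> scar (dbase B),
          (forall i, i \notin xs -> w i = h (v i)) /\ qsat w psi) ->
    exists w : nat -> scar (dbase M),
      (forall i, i \notin xs -> w i = v i) /\ qsat w psi.

End Semantics.

Definition zariski_dense2 (K : fieldType) (G : K -> K -> Prop) : Prop :=
  forall p : {mpoly K[2]}, p != 0 ->
    exists a b, G a b /\ p.@[ [ffun i : 'I_2 => if i == ord0 then a else b] ] != 0.

(* If delta_c is onto, E is nowhere zero with E 0 = 1, so on Gamma_c a monomial
   y^i z^j becomes the character x |-> E(x)^i E(cx)^j of (K, +).  Its
   logarithmic derivative at points where (d E(x), d E(cx)) is (1, 0), resp.
   (0, 1), is i, resp. j, so distinct monomials give distinct characters, and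
   Dedekind's independence of characters shows that no nonzero polynomial
   vanishes on Gamma_c.

   Conversely, if Gamma_c is Zariski dense then every finite set of nonzero
   polynomials has a common non-zero on Gamma_c, so an ultrapower B of K
   contains xi with (E xi, E (c xi)) algebraically independent over K.  Hence
   d extends to K[E xi, E (c xi)] with arbitrary values a, b at E xi and
   E (c xi), and then (characteristic 0, Zorn) to all of B.  By Los, B is an
   extension of K modelling T_M^delta in which d E(x) = a, d E(cx) = b has a
   solution, and existential closedness pulls it back to K. *)

From HB Require Import structures.
From mathcomp Require Import all_boot all_order all_algebra.
From mathcomp Require Import mpoly.
From mathcomp Require Import boolp classical_sets filter.
From mathcomp Require Import ring.
From Stdlib Require Import ClassicalEpsilon.
Set Implicit Arguments. Unset Strict Implicit. Unset Printing Implicit Defensive.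
Import GRing.Theory.
Local Open Scope ring_scope.

Lemma poly_lift (A B : nzRingType) (f : A -> B) (g : {poly B}) :
  f 0 = 0 -> (forall i, exists a, g`_i = f a) -> exists g0, g = map_poly f g0.
Proof.
move=> f0 /choice [a ha].
exists (\poly_(i < size g) a i); apply/polyP => i.
rewrite coef_map_id0 // coef_poly; case: ltnP => // gi.
by rewrite f0 nth_default.
Qed.

Lemma map_polyC_id0 (A B : nzRingType) (f : A -> B) (a : A) :
  f 0 = 0 -> map_poly f a%:P = (f a)%:P.
Proof. by move=> f0; apply/polyP => i; rewrite coef_map_id0 // !coefC; case: eqP. Qed.

Lemma horner_map_poly (A B : nzRingType) (f : A -> B) (p : {poly A}) x :
  (map_poly f p).[x] = \sum_(i < size p) f p`_i * x ^+ i.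
Proof.
rewrite (horner_coef_wide _ (size_poly _ _)); apply: eq_bigr => i _.
by rewrite coef_poly ltn_ord.
Qed.

Lemma natr_inj_pchar0 (K : fieldType) : [pchar K] =i pred0 ->
  injective (fun n : nat => n%:R : K).
Proof.
move=> char0 i j /eqP; rewrite -subr_eq0.
wlog le_ji : i j / (j <= i)%N => [hw|].
  by case: (leqP j i) => [|/ltnW] l; [apply: hw|rewrite -opprB oppr_eq0 => /hw ->].
by rewrite -natrB // ((pcharf0P K).1 char0) subn_eq0 => le_ij; apply/eqP; rewrite eqn_leq le_ij.
Qed.

Lemma mulrn_inj_pchar0 (K : fieldType) (x : K) (i j : nat) : [pchar K] =i pred0 ->
  x != 0 -> x *+ i = x *+ j -> i = j.
Proof.
move=> char0 x0; rewrite -[x *+ i]mulr_natr -[x *+ j]mulr_natr => /(mulfI x0).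
exact: natr_inj_pchar0.
Qed.

Lemma poly_vanish_eq0 (K : fieldType) (p : {poly K}) : [pchar K] =i pred0 ->
  (forall z, p.[z] = 0) -> p = 0.
Proof.
move=> char0 p0; apply/eqP; apply: contraT => pn0.
have := max_poly_roots pn0 (rs := [seq i%:R | i <- iota 0 (size p)]).
rewrite size_map size_iota ltnn; apply.
  by apply/allP => x /mapP [i _ ->]; rewrite /root p0.
by rewrite map_inj_uniq ?iota_uniq //; apply: natr_inj_pchar0.
Qed.

Lemma size_sub_same_lead (F : fieldType) (g h : {poly F}) : g != 0 ->
  size h = size g -> lead_coef h = lead_coef g -> (size (g - h)%R < size g)%N.
Proof.
move=> g0 sh lh; have sg : (0 < size g)%N by rewrite size_poly_gt0.
rewrite -(prednK sg) ltnS; apply/leq_sizeP => j hj.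
rewrite coefB; case: (ltngtP j (size g).-1) => [|lt|->].
- by rewrite ltnNge hj.
- by rewrite !nth_default ?subrr // ?sh -(prednK sg).
- by move: lh; rewrite /lead_coef sh => ->; rewrite subrr.
Qed.

Lemma deriv_neq0 (F : fieldType) (p : {poly F}) : [pchar F] =i pred0 ->
  (1 < size p)%N -> p^`() != 0.
Proof.
move=> char0 sp; have e : (size p).-2.+1 = (size p).-1 by case: (size p) sp => [|[|k]].
apply/eqP => /(congr1 (fun q : {poly F} => q`_(size p).-2)) /eqP.
rewrite coef_deriv coef0 -mulr_natr mulf_eq0 e -/(lead_coef p) lead_coef_eq0.
by rewrite ((pcharf0P F).1 char0) -size_poly_eq0; case: (size p) sp => [|[|k]].
Qed.

Section UltrafilterFacts.
Variables (I : Type) (U : set_system I).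
Context {HU : UltraFilter U}.

Lemma ultra_all (A : set I) : (forall i, A i) -> U A.
Proof. by move=> hA; apply: filterS filterT => i _; apply: hA. Qed.

Lemma ultra_const (P : Prop) : U (fun _ => P) <-> P.
Proof.
split=> [hP|p]; last exact: ultra_all.
by apply: contrapT => np; apply: (filter_not_empty U); apply: filterS hP.
Qed.

Lemma ultra_bigI n (A : 'I_n -> set I) :
  (forall k, U (A k)) -> U (fun i => forall k, A k i).
Proof.
elim: n A => [|n IH] A hA; first by apply: ultra_all => i [].
have hlift := IH (fun k => A (lift ord0 k)) (fun k => hA _).
apply: filterS (filterI (hA ord0) hlift) => i [h0 h] k.
by case: (unliftP ord0 k) => [j ->|->].
Qed.

End UltrafilterFacts.

Section Ultrapower.
Variables (I : Type) (U : set_system I) (K : fieldType).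
Context {HU : UltraFilter U}.

Definition ueq (f g : I -> K) := U (fun i => f i = g i).

Lemma ueq_refl f : ueq f f.
Proof. exact: ultra_all. Qed.

Lemma ueq_sym f g : ueq f g -> ueq g f.
Proof. exact: filterS. Qed.

Lemma ueq_trans f g h : ueq f g -> ueq g h -> ueq f h.
Proof. by move=> fg gh; apply: filterS (filterI fg gh) => i [-> ->]. Qed.

(* Classes modulo [ueq] are represented by their [epsilon]-chosen member. *)
Definition canon (f : I -> K) : I -> K :=
  epsilon (inhabits (fun _ => 0)) (ueq f).

Lemma ueq_canon f : ueq f (canon f).
Proof. by apply: epsilon_spec; exists f; apply: ueq_refl. Qed.

Lemma canon_ueq f g : ueq f g -> canon f = canon g.
Proof.
move=> fg; congr epsilon; apply/funext => h; apply/propext.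
by split; [apply: ueq_trans (ueq_sym fg)|apply: ueq_trans fg].
Qed.

Lemma canon_id f : canon (canon f) = canon f.
Proof. exact/canon_ueq/ueq_sym/ueq_canon. Qed.

(* The phantom argument makes the type, hence its field structure, depend on [HU]. *)
Definition ultrapower of UltraFilter U := {f : I -> K | canon f = f}.
Local Notation UP := (ultrapower HU).

HB.instance Definition _ := gen_eqMixin UP.
HB.instance Definition _ := gen_choiceMixin UP.

Definition cls (f : I -> K) : UP := exist _ (canon f) (canon_id f).
Definition rep (x : UP) : I -> K := sval x.

Lemma repK x : cls (rep x) = x.
Proof. by case: x => f hf; apply: eq_exist; rewrite /= hf. Qed.

Lemma cls_eqP f g : cls f = cls g <-> ueq f g.
Proof.
split=> [/(congr1 sval) /= e|fg]; last exact/eq_exist/canon_ueq.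
by apply: ueq_trans (ueq_canon f) _; rewrite e; apply/ueq_sym/ueq_canon.
Qed.

Lemma clsK f : ueq (rep (cls f)) f.
Proof. exact/ueq_sym/ueq_canon. Qed.

Lemma cls_lift1 (op : K -> K) f :
  cls (fun i => op (rep (cls f) i)) = cls (fun i => op (f i)).
Proof. by apply/cls_eqP; apply: filterS (clsK f) => i ->. Qed.

Lemma cls_lift2 (op : K -> K -> K) f g :
  cls (fun i => op (rep (cls f) i) (rep (cls g) i)) = cls (fun i => op (f i) (g i)).
Proof. by apply/cls_eqP; apply: filterS (filterI (clsK f) (clsK g)) => i [-> ->]. Qed.

Definition uzero : UP := cls (fun _ => 0).
Definition uone : UP := cls (fun _ => 1).
Definition uadd (x y : UP) : UP := cls (fun i => rep x i + rep y i).
Definition uopp (x : UP) : UP := cls (fun i => - rep x i).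
Definition umul (x y : UP) : UP := cls (fun i => rep x i * rep y i).
Definition uinv (x : UP) : UP := cls (fun i => (rep x i)^-1).

Lemma uaddE f g : uadd (cls f) (cls g) = cls (fun i => f i + g i).
Proof. exact: (cls_lift2 +%R). Qed.

Lemma uoppE f : uopp (cls f) = cls (fun i => - f i).
Proof. exact: (cls_lift1 -%R). Qed.

Lemma umulE f g : umul (cls f) (cls g) = cls (fun i => f i * g i).
Proof. exact: (cls_lift2 *%R). Qed.

Lemma uinvE f : uinv (cls f) = cls (fun i => (f i)^-1).
Proof. exact: (cls_lift1 GRing.inv). Qed.

Lemma uaddA : associative uadd.
Proof.
move=> x y z; rewrite -[x]repK -[y]repK -[z]repK.
by rewrite !uaddE; congr cls; apply/funext => i; rewrite addrA.
Qed.

Lemma uaddC : commutative uadd.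
Proof.
move=> x y; rewrite -[x]repK -[y]repK.
by rewrite !uaddE; congr cls; apply/funext => i; rewrite addrC.
Qed.

Lemma uadd0 : left_id uzero uadd.
Proof.
move=> x; rewrite -[x]repK.
by rewrite uaddE; congr cls; apply/funext => i; rewrite add0r.
Qed.

Lemma uaddN : left_inverse uzero uopp uadd.
Proof.
move=> x; rewrite -[x]repK.
by rewrite uoppE uaddE; congr cls; apply/funext => i; rewrite addNr.
Qed.

HB.instance Definition _ := GRing.isZmodule.Build UP uaddA uaddC uadd0 uaddN.

Lemma umulA : associative umul.
Proof.
move=> x y z; rewrite -[x]repK -[y]repK -[z]repK.
by rewrite !umulE; congr cls; apply/funext => i; rewrite mulrA.
Qed.

Lemma umulC : commutative umul.
Proof.
move=> x y; rewrite -[x]repK -[y]repK.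
by rewrite !umulE; congr cls; apply/funext => i; rewrite mulrC.
Qed.

Lemma umul1 : left_id uone umul.
Proof.
move=> x; rewrite -[x]repK.
by rewrite umulE; congr cls; apply/funext => i; rewrite mul1r.
Qed.

Lemma umulDl : left_distributive umul uadd.
Proof.
move=> x y z; rewrite -[x]repK -[y]repK -[z]repK.
by rewrite uaddE !umulE uaddE; congr cls; apply/funext => i; rewrite mulrDl.
Qed.

Lemma uone_neq0 : uone != uzero.
Proof.
apply/eqP => /cls_eqP e; apply: (filter_not_empty U).
by apply: filterS e => i /eqP; rewrite oner_eq0.
Qed.

HB.instance Definition _ :=
  GRing.Zmodule_isComNzRing.Build UP umulA umulC umul1 umulDl uone_neq0.

Lemma umulVf (x : UP) : x != 0 -> uinv x * x = 1.
Proof.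
rewrite -[x]repK; set f := rep x => f0.
have {}f0 : U (fun i => f i != 0).
  have [//|f0'] := in_ultra_setVsetC (fun i => f i != 0) HU.
  by case/eqP: f0; apply/cls_eqP; apply: filterS f0' => i /negP/negbNE/eqP.
rewrite uinvE [_ * _]umulE; apply/cls_eqP.
by apply: filterS f0 => i /mulVf.
Qed.

Lemma uinv0 : uinv 0 = 0.
Proof. by rewrite uinvE; congr cls; apply/funext => i; rewrite invr0. Qed.

HB.instance Definition _ := GRing.ComNzRing_isField.Build UP umulVf uinv0.

Lemma cls0 : cls (fun _ => 0) = 0. Proof. by []. Qed.
Lemma cls1 : cls (fun _ => 1) = 1. Proof. by []. Qed.
Lemma clsD f g : cls (fun i => f i + g i) = cls f + cls g.
Proof. by rewrite -uaddE. Qed.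
Lemma clsN f : cls (fun i => - f i) = - cls f.
Proof. by rewrite -uoppE. Qed.
Lemma clsM f g : cls (fun i => f i * g i) = cls f * cls g.
Proof. by rewrite -umulE. Qed.
Lemma clsX f n : cls (fun i => f i ^+ n) = cls f ^+ n.
Proof.
elim: n => [|n IH]; first by rewrite expr0 -cls1.
by rewrite exprS -IH -clsM; congr cls; apply/funext => i; rewrite exprS.
Qed.
Lemma cls_sum n (F : 'I_n -> I -> K) :
  cls (fun i => \sum_(k < n) F k i) = \sum_(k < n) cls (F k).
Proof.
elim: n F => [|n IH] F.
  by rewrite big_ord0 -cls0; congr cls; apply/funext => i; rewrite big_ord0.
rewrite big_ord_recr -IH /= -clsD; congr cls; apply/funext => i.
by rewrite big_ord_recr.
Qed.

Lemma cls_horner (A : nzRingType) (F : A -> I -> K) (p : {poly A}) f :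
  (map_poly (fun a => cls (F a)) p).[cls f] =
  cls (fun s => (map_poly (fun a => F a s) p).[f s]).
Proof.
rewrite horner_map_poly; under eq_bigr do rewrite -clsX -clsM.
by rewrite -cls_sum; congr cls; apply/funext => s; rewrite horner_map_poly.
Qed.

Lemma cls_const_inj : injective (fun k : K => cls (fun _ => k)).
Proof. by move=> k k' /cls_eqP /ultra_const. Qed.

End Ultrapower.

Lemma partial_choice (A B : Type) (b0 : B) (P : A -> B -> Prop) :
  exists g : A -> B, forall a, (exists b, P a b) -> P a (g a).
Proof.
apply: (choice (fun a b => (exists b, P a b) -> P a b)) => a.
by have [[b Pb]|nP] := pselect (exists b, P a b); [exists b|exists b0].
Qed.

Section Los.
Variables (S : sig) (M : struc S) (I : Type) (U : set_system I).
Context {HU : UltraFilter U}.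
Local Notation K := (scar M).
Local Notation UP := (ultrapower K HU).
Local Notation cls := (@cls I U K HU).

Definition ultrapower_struc : struc S :=
  @Struc S UP (fun x => cls (fun i => sE M (rep x i)))
    (fun f a => cls (fun i => sF M f (fun k => rep (a k) i)))
    (fun r a => U (fun i => sR M r (fun k => rep (a k) i))).

Lemma clsK_tuple n (g : 'I_n -> I -> K) :
  U (fun i => forall k, rep (cls (g k)) i = g k i).
Proof. by apply: ultra_bigI => k; apply: clsK. Qed.

Lemma ultrapower_sE f : sE ultrapower_struc (cls f) = cls (fun i => sE M (f i)).
Proof. exact: cls_lift1. Qed.

Lemma ultrapower_sF f (g : 'I_(farity f) -> I -> K) :
  sF ultrapower_struc f (fun k => cls (g k)) = cls (fun i => sF M f (fun k => g k i)).
Proof.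
apply/cls_eqP; apply: filterS (clsK_tuple g) => i e.
by congr (sF M f); apply/funext => k; rewrite e.
Qed.

Lemma los_eval (w : I -> nat -> K) (t : lterm S) :
  leval (M := ultrapower_struc) (fun j => cls (fun i => w i j)) t
  = cls (fun i => leval (w i) t).
Proof.
elim: t => [n|||a IHa b IHb|a IHa|a IHa b IHb|a IHa|f args IH] //=.
- by rewrite IHa IHb -clsD.
- by rewrite IHa -clsN.
- by rewrite IHa IHb -clsM.
- by rewrite IHa; apply: ultrapower_sE.
- apply/cls_eqP; apply: filterS (clsK_tuple (fun k i => leval (w i) (args k))).
  by move=> i e; congr (sF M f); apply/funext => k; rewrite IH e.
Qed.

Lemma upd_cls (w : I -> nat -> K) j (a : UP) :
  upd (fun j0 => cls (fun i => w i j0)) j a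
  = (fun j0 => cls (fun i => upd (w i) j (rep a i) j0)).
Proof. by apply/funext => j0; rewrite /upd; case: eqP; rewrite ?repK. Qed.

Lemma los (phi : lform S) (w : I -> nat -> K) :
  lsat (M := ultrapower_struc) (fun j => cls (fun i => w i j)) phi
  <-> U (fun i => lsat (w i) phi).
Proof.
elim: phi w => [a b|r args||p IHp q IHq|p IHp q IHq|p IHp q IHq|j p IHp|j p IHp] w /=.
- by rewrite !los_eval; apply: cls_eqP.
- under eq_fun => i do under eq_fun => k do rewrite los_eval.
  split; apply: filterS2 (clsK_tuple (fun k i => leval (w i) (args k)));
    by move=> i e; have -> : (fun k => rep _ i) = _ := funext e.
- by split=> // /(filter_not_empty U).
- split=> [h|h /IHp hp]; last by apply/IHq; apply: filterS2 h hp => i; apply.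
  have [/IHp/h/IHq hq|np] := in_ultra_setVsetC (fun i => lsat (w i) p) HU.
    by apply: filterS hq => i ? _.
  by apply: filterS np => i np /np.
- split=> [[/IHp hp /IHq hq]|h]; first exact: filterI hp hq.
  by split; [apply/IHp|apply/IHq]; apply: filterS h => i [].
- split=> [[/IHp hp|/IHq hq]|h].
  + by apply: filterS hp => i; left.
  + by apply: filterS hq => i; right.
  have [hp|np] := in_ultra_setVsetC (fun i => lsat (w i) p) HU; first by left; apply/IHp.
  by right; apply/IHq; apply: filterS2 h np => i [].
- split=> [h|h a]; last first.
    by rewrite upd_cls; apply/IHp; apply: filterS h => i; apply.
  have [g hg] := partial_choice 0 (fun i a => ~ lsat (upd (w i) j a) p).
  have [//|np] := in_ultra_setVsetC (fun i => forall a, lsat (upd (w i) j a) p) HU.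
  have := h (cls g); rewrite upd_cls => /IHp hs; exfalso; apply: (filter_not_empty U).
  apply: filterS (filterI np (filterI hs (clsK g))) => i [ni [hi e]].
  by apply: (hg i); [apply/existsNP|rewrite -e].
- split=> [[a]|h].
    by rewrite upd_cls => /IHp; apply: filterS => i ha; exists (rep a i).
  have [g hg] := partial_choice 0 (fun i a => lsat (upd (w i) j a) p).
  exists (cls g); rewrite upd_cls; apply/IHp.
  by apply: filterS2 h (clsK g) => i /hg hi ->.
Qed.

Lemma ultrapower_models T : models T M -> models T ultrapower_struc.
Proof.
move=> mM phi Tphi v; rewrite -(funext (fun j => repK (v j))).
by apply/(los phi (fun i j => rep (v j) i)); apply: ultra_all => i; apply: mM.
Qed.

Lemma los_diagonal (phi : lform S) (v : nat -> K) :
  lsat v phi <-> lsat (M := ultrapower_struc) (fun j => cls (fun _ => v j)) phi.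
Proof. by rewrite (los phi (fun _ => v)) ultra_const. Qed.

End Los.

Section PartialDerivations.
Variable F : fieldType.

Definition is_subring (R : set F) :=
  [/\ R 1, forall x y, R x -> R y -> R (x - y) & forall x y, R x -> R y -> R (x * y)].

Definition derivation_on (R : set F) (D : F -> F) :=
  (forall x y, R x -> R y -> D (x + y) = D x + D y) /\
  (forall x y, R x -> R y -> D (x * y) = x * D y + y * D x).

Definition extends (R : set F) (D : F -> F) (R' : set F) (D' : F -> F) :=
  forall x, R x -> R' x /\ D' x = D x.

Definition coefs_in (R : set F) (g : {poly F}) := forall i, R g`_i.

Definition adjoin (R : set F) (beta : F) : set F :=
  fun y => exists2 g, coefs_in R g & y = g.[beta].

Definition fractions (R : set F) : set F :=
  fun y => exists r s, [/\ R r, R s, s != 0 & y = r / s].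

Lemma subringT : is_subring [set: F].
Proof. by []. Qed.

Section Laws.
Variables (R : set F) (D : F -> F).
Hypotheses (sR : is_subring R) (dD : derivation_on R D).

Lemma subring1 : R 1. Proof. by case: sR. Qed.
Lemma subringB x y : R x -> R y -> R (x - y). Proof. by case: sR => _ + _; apply. Qed.
Lemma subringM x y : R x -> R y -> R (x * y). Proof. by case: sR => _ _; apply. Qed.
Lemma subring0 : R 0. Proof. by rewrite -(subrr 1); apply: subringB; apply: subring1. Qed.
Lemma subringN x : R x -> R (- x). Proof. by rewrite -sub0r; apply: subringB subring0. Qed.
Lemma subringD x y : R x -> R y -> R (x + y).
Proof. by move=> hx hy; rewrite -[y]opprK; apply: subringB => //; apply: subringN. Qed.
Lemma subringMn x n : R x -> R (x *+ n).
Proof.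
by move=> hx; elim: n => [|n IH]; [rewrite mulr0n; apply: subring0|rewrite mulrS; apply: subringD].
Qed.
Lemma subring_sum n (f : 'I_n -> F) : (forall j, R (f j)) -> R (\sum_j f j).
Proof.
elim: n f => [|n IH] f hf; first by rewrite big_ord0; apply: subring0.
by rewrite big_ord_recr; apply: subringD => //; apply: IH.
Qed.

Lemma derD x y : R x -> R y -> D (x + y) = D x + D y. Proof. by case: dD => + _; apply. Qed.
Lemma derM x y : R x -> R y -> D (x * y) = x * D y + y * D x. Proof. by case: dD => _; apply. Qed.
Lemma der0 : D 0 = 0.
Proof. by apply: (addrI (D 0)); rewrite -derD ?addr0 //; apply: subring0. Qed.
Lemma der1 : D 1 = 0.
Proof.
have := derM subring1 subring1; rewrite mulr1 !mul1r => e.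
by apply: (addrI (D 1)); rewrite -e addr0.
Qed.
Lemma derN x : R x -> D (- x) = - D x.
Proof. by move=> hx; apply/eqP; rewrite -addr_eq0 -derD ?addNr ?der0 //; apply: subringN. Qed.
Lemma der_sum n (f : 'I_n -> F) : (forall j, R (f j)) -> D (\sum_j f j) = \sum_j D (f j).
Proof.
elim: n f => [|n IH] f hf; first by rewrite !big_ord0 der0.
by rewrite !big_ord_recr derD ?IH //; apply: subring_sum.
Qed.

Lemma coefs_inB g h : coefs_in R g -> coefs_in R h -> coefs_in R (g - h).
Proof. by move=> hg hh i; rewrite coefB; apply: subringB. Qed.
Lemma coefs_inD g h : coefs_in R g -> coefs_in R h -> coefs_in R (g + h).
Proof. by move=> hg hh i; rewrite coefD; apply: subringD. Qed.
Lemma coefs_inM g h : coefs_in R g -> coefs_in R h -> coefs_in R (g * h).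
Proof. by move=> hg hh i; rewrite coefM; apply: subring_sum => j; apply: subringM. Qed.
Lemma coefs_inC c : R c -> coefs_in R c%:P.
Proof. by move=> hc i; rewrite coefC; case: eqP => _ //; apply: subring0. Qed.
Lemma coefs_inXn n : coefs_in R 'X^n.
Proof. by move=> i; rewrite coefXn; case: eqP => _; [apply: subring1|apply: subring0]. Qed.
Lemma coefs_inX : coefs_in R 'X.
Proof. exact: (coefs_inXn 1). Qed.
Lemma coefs_inZ c g : R c -> coefs_in R g -> coefs_in R (c *: g).
Proof. by move=> hc hg i; rewrite coefZ; apply: subringM. Qed.
Lemma coefs_in_deriv g : coefs_in R g -> coefs_in R g^`().
Proof. by move=> hg i; rewrite coef_deriv; apply: subringMn. Qed.

Lemma coef_map_der g i : (map_poly D g)`_i = D g`_i.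
Proof. by rewrite coef_map_id0 // der0. Qed.

Lemma map_derM g h : coefs_in R g -> coefs_in R h ->
  map_poly D (g * h) = map_poly D g * h + g * map_poly D h.
Proof.
move=> hg hh; apply/polyP => i; rewrite coefD coef_map_der !coefM der_sum => [|j].
  by rewrite -big_split; apply: eq_bigr => j _; rewrite derM // !coef_map_der addrC mulrC.
exact: subringM.
Qed.

(* g^D(beta) + g'(beta) v is the only possible value at g.[beta] of a
   derivation extending D with beta |-> v. *)
Definition der_ext (beta v : F) (g : {poly F}) :=
  (map_poly D g).[beta] + g^`().[beta] * v.

Section ExtensionFormula.
Variables (beta v : F).
Local Notation Phi := (der_ext beta v).

Lemma der_extD g h : coefs_in R g -> coefs_in R h -> Phi (g + h) = Phi g + Phi h.
Proof.
move=> hg hh; rewrite /der_ext.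
have -> : map_poly D (g + h) = map_poly D g + map_poly D h.
  by apply/polyP => i; rewrite coefD !coef_map_der coefD derD.
by rewrite derivD !hornerD mulrDl; ring.
Qed.
Lemma der_extN g : coefs_in R g -> Phi (- g) = - Phi g.
Proof.
move=> hg; rewrite /der_ext derivN !hornerN mulNr opprD; congr (_ - _).
by rewrite -hornerN; congr (_.[_]); apply/polyP => i; rewrite coefN !coef_map_der coefN derN.
Qed.
Lemma der_extB g h : coefs_in R g -> coefs_in R h -> Phi (g - h) = Phi g - Phi h.
Proof.
by move=> hg hh; rewrite der_extD ?der_extN // => i; rewrite coefN; apply: subringN.
Qed.
Lemma der_extM g h : coefs_in R g -> coefs_in R h ->
  Phi (g * h) = Phi g * h.[beta] + g.[beta] * Phi h.
Proof. by move=> hg hh; rewrite /der_ext map_derM // derivM !hornerD !hornerM; ring. Qed.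
Lemma der_extC c : Phi c%:P = D c.
Proof.
by rewrite /der_ext derivC horner0 mul0r addr0 map_polyC_id0 ?der0 // hornerC.
Qed.
Lemma der_extX : Phi 'X = v.
Proof.
rewrite /der_ext derivX hornerC mul1r (_ : map_poly D 'X = 0) ?horner0 ?add0r //.
by apply/polyP => i; rewrite coef_map_der coefX coef0; case: eqP; rewrite ?der0 ?der1.
Qed.
Lemma der_ext0 : Phi 0 = 0.
Proof. by rewrite -(subrr 0) der_extB ?subrr // => i; rewrite coef0; apply: subring0. Qed.

End ExtensionFormula.

Lemma adjoin_subring beta : is_subring (adjoin R beta).
Proof.
split.
- by exists 1; [apply: coefs_inC; apply: subring1|rewrite hornerC].
- move=> _ _ [g hg ->] [h hh ->]; exists (g - h); first exact: coefs_inB.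
  by rewrite hornerD hornerN.
- move=> _ _ [g hg ->] [h hh ->]; exists (g * h); first exact: coefs_inM.
  by rewrite hornerM.
Qed.

Lemma adjoin_self beta : adjoin R beta beta.
Proof. by exists 'X; [apply: coefs_inX|rewrite hornerX]. Qed.

Lemma derivation_adjoin beta v :
  (forall g, coefs_in R g -> g.[beta] = 0 -> der_ext beta v g = 0) ->
  exists2 D', derivation_on (adjoin R beta) D' &
    extends R D (adjoin R beta) D' /\ D' beta = v.
Proof.
move=> hv; pose P y g := coefs_in R g /\ y = g.[beta].
pose D' y := der_ext beta v (epsilon (inhabits 0) (P y)).
have D'E g : coefs_in R g -> D' g.[beta] = der_ext beta v g.
  move=> hg; have [hr er] := epsilon_spec (inhabits 0) (P g.[beta]) (ex_intro _ g (conj hg erefl)).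
  apply/eqP; rewrite -subr_eq0 -der_extB //; apply/eqP/hv; first exact: coefs_inB.
  by rewrite hornerD hornerN -er subrr.
exists D'; first split.
- move=> _ _ [g hg ->] [h hh ->].
  by rewrite -hornerD !D'E ?der_extD //; apply: coefs_inD.
- move=> _ _ [g hg ->] [h hh ->].
  rewrite -hornerM !D'E ?der_extM //; last exact: coefs_inM.
  by rewrite addrC mulrC [h.[beta] * _]mulrC.
split; last by rewrite -[beta]hornerX D'E ?der_extX //; apply: coefs_inX.
move=> x hx; split; first by exists x%:P; [apply: coefs_inC|rewrite hornerC].
by have := D'E _ (coefs_inC hx); rewrite hornerC der_extC.
Qed.

Lemma fractions_subring : is_subring (fractions R).
Proof.
split.
- by exists 1, 1; rewrite divr1 oner_eq0; split => //; apply: subring1.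
- move=> _ _ [r1 [s1 [h1 h2 h3 ->]]] [r2 [s2 [h4 h5 h6 ->]]].
  exists (r1 * s2 - r2 * s1), (s1 * s2); split; rewrite ?mulf_neq0 //.
  + by apply: subringB; apply: subringM.
  + exact: subringM.
  + by field; rewrite h3 h6.
- move=> _ _ [r1 [s1 [h1 h2 h3 ->]]] [r2 [s2 [h4 h5 h6 ->]]].
  exists (r1 * r2), (s1 * s2); split; rewrite ?mulf_neq0 //; try exact: subringM.
  by field; rewrite h3 h6.
Qed.

Lemma fractions_inv x : R x -> x != 0 -> fractions R x^-1.
Proof. by move=> hx x0; exists 1, x; split; rewrite ?div1r //; apply: subring1. Qed.

(* The quotient rule is independent of the representative r/s: apply the
   Leibniz rule to r s' = r' s. *)
Lemma derivation_fractions :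
  exists2 D', derivation_on (fractions R) D' & extends R D (fractions R) D'.
Proof.
pose P y (p : F * F) := [/\ R p.1, R p.2, p.2 != 0 & y = p.1 / p.2].
pose rep y := epsilon (inhabits (0, 1)) (P y).
pose D' y := ((rep y).2 * D (rep y).1 - (rep y).1 * D (rep y).2) / (rep y).2 ^+ 2.
have D'E r s : R r -> R s -> s != 0 -> D' (r / s) = (s * D r - r * D s) / s ^+ 2.
  move=> hr hs s0; have : P (r / s) (rep (r / s)) by apply: epsilon_spec; exists (r, s).
  rewrite /D'; case: (rep _) => r' s' [/= hr' hs' s0' e].
  have e1 : r' = r / s * s' by rewrite e mulfVK.
  have e0 : r * s' = r' * s by rewrite e1; field.
  have e2 : D r' = (r * D s' + s' * D r - r' * D s) / s.
    by have := congr1 D e0; rewrite !derM // => ->; field.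
  by rewrite e2 e1; field; rewrite s0 s0'.
exists D'; first split.
- move=> _ _ [r1 [s1 [h1 h2 h3 ->]]] [r2 [s2 [h4 h5 h6 ->]]].
  have -> : r1 / s1 + r2 / s2 = (r1 * s2 + r2 * s1) / (s1 * s2) by field; rewrite h3 h6.
  rewrite !D'E ?mulf_neq0 //; try by [apply: subringM|apply: subringD; apply: subringM].
  rewrite derD; try exact: subringM.
  by rewrite !derM //; field; rewrite h3 h6.
- move=> _ _ [r1 [s1 [h1 h2 h3 ->]]] [r2 [s2 [h4 h5 h6 ->]]].
  have -> : r1 / s1 * (r2 / s2) = (r1 * r2) / (s1 * s2) by field; rewrite h3 h6.
  rewrite !D'E ?mulf_neq0 //; try exact: subringM.
  by rewrite !derM //; field; rewrite h3 h6.
move=> x hx; split; first by exists x, 1; rewrite divr1 oner_eq0; split => //; apply: subring1.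
have := D'E x 1 hx subring1 (oner_neq0 _).
by rewrite !divr1 der1 expr1n divr1 mulr0 subr0 mul1r.
Qed.

Section MinimalPolynomial.
Hypothesis R_inv : forall x, R x -> x != 0 -> R x^-1.
Variables (beta v : F) (p : {poly F}).
Hypotheses (Rp : coefs_in R p) (p0 : p != 0) (p_beta : p.[beta] = 0).
Hypothesis p_min : forall g, coefs_in R g -> g != 0 -> g.[beta] = 0 -> (size p <= size g)%N.
Hypothesis der_p : der_ext beta v p = 0.

(* Subtracting (lead g / lead p) X^k p from g lowers its size, and
   der_ext kills multiples of p since p.[beta] = der_ext p = 0. *)
Lemma der_ext_min_poly g : coefs_in R g -> g.[beta] = 0 -> der_ext beta v g = 0.
Proof.
elim: {g}(size g) {-2}g (leqnn (size g)) => [|m IH] g sg Rg g_beta.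
  by move: sg; rewrite leqn0 size_poly_eq0 => /eqP ->; apply: der_ext0.
have [->|g0] := eqVneq g 0; first exact: der_ext0.
have lp0 : lead_coef p != 0 by rewrite lead_coef_eq0.
pose c := lead_coef g / lead_coef p.
have c0 : c != 0 by rewrite mulf_neq0 ?invr_eq0 ?lead_coef_eq0.
have Rc : R c by apply: subringM; [apply: Rg|apply: R_inv => //; apply: Rp].
have RcX : coefs_in R (c *: 'X^(size g - size p)).
  by apply: coefs_inZ => //; apply: coefs_inXn.
pose h := c *: 'X^(size g - size p) * p.
have Rh : coefs_in R h by apply: coefs_inM.
have cX0 : c *: 'X^(size g - size p) != 0.
  by rewrite scaler_eq0 negb_or c0 -size_poly_eq0 size_polyXn.
have sh : size h = size g.
  by rewrite size_mul // size_scale // size_polyXn addSn subnK // p_min.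
have lh : lead_coef h = lead_coef g.
  by rewrite lead_coefM lead_coefZ lead_coefXn mulr1 mulfVK.
have gh_beta : (g - h).[beta] = 0.
  by rewrite hornerD hornerN hornerM p_beta mulr0 g_beta subrr.
have sgh : (size (g - h)%R <= m)%N.
  by rewrite -ltnS (leq_trans (size_sub_same_lead g0 sh lh)).
have := IH _ sgh (coefs_inB Rg Rh) gh_beta.
by rewrite der_extB // der_extM // der_p p_beta !mulr0 addr0 subr0.
Qed.

End MinimalPolynomial.

Lemma derivation_algebraic_value (char0 : [pchar F] =i pred0) beta :
  (forall x, R x -> x != 0 -> R x^-1) ->
  exists v, forall g, coefs_in R g -> g.[beta] = 0 -> der_ext beta v g = 0.
Proof.
move=> R_inv; pose vanishes g := [/\ coefs_in R g, g != 0 & g.[beta] = 0].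
have [[g0 hg0]|none] := pselect (exists g, vanishes g); last first.
  exists 0 => g Rg g_beta; have [->|gn0] := eqVneq g 0; first exact: der_ext0.
  by case: none; exists g.
have ex_size : exists n, `[< exists g, vanishes g /\ size g = n >].
  by exists (size g0); apply/asboolP; exists g0.
case: (ex_minnP ex_size) => n /asboolP [p [[Rp p0 p_beta] <-]] p_min {ex_size}.
have {}p_min g : coefs_in R g -> g != 0 -> g.[beta] = 0 -> (size p <= size g)%N.
  by move=> Rg gn0 g_beta; apply: p_min; apply/asboolP; exists g.
have dp0 : p^`().[beta] != 0.
  have sp : (1 < size p)%N.
    rewrite ltnNge; apply/negP => /size1_polyC ep.
    by move: p0; rewrite ep -[p`_0](hornerC _ beta) -ep p_beta eqxx.
  apply/eqP => dp_beta.
  have := p_min _ (coefs_in_deriv Rp) (deriv_neq0 char0 sp) dp_beta.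
  by rewrite leqNgt lt_size_deriv.
exists (- (map_poly D p).[beta] / p^`().[beta]).
by apply: der_ext_min_poly => //; rewrite /der_ext; field.
Qed.

End Laws.

Section ExtensionTheorem.
Variables (R0 : set F) (D0 : F -> F).

Definition extends_base (p : set F * (F -> F)) :=
  [/\ is_subring p.1, derivation_on p.1 p.2 & extends R0 D0 p.1 p.2].

Definition partial_der := {p | extends_base p}.

Definition pder_le (s t : partial_der) :=
  extends (sval s).1 (sval s).2 (sval t).1 (sval t).2.

Lemma pder_le_refl s : pder_le s s.
Proof. by move=> x. Qed.

Lemma pder_le_trans : forall r s t, pder_le r s -> pder_le s t -> pder_le r t.
Proof.
move=> r s t rs st x /rs [/st [ht et] es]; split=> //.
by rewrite et es.
Qed.

(* The union of a chain, with its value at x read off any member defined at x. *)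
Lemma pder_chain_ub (A : set partial_der) (s0 : partial_der) :
  A s0 -> total_on A pder_le -> exists t, forall s, A s -> pder_le s t.
Proof.
move=> As0 Atot.
pose dom x := exists2 s, A s & (sval s).1 x.
pose pick x := epsilon (inhabits s0) (fun s => A s /\ (sval s).1 x).
pose Du x := (sval (pick x)).2 x.
have DuE s x : A s -> (sval s).1 x -> Du x = (sval s).2 x.
  move=> As hx; have [As' hx'] : A (pick x) /\ (sval (pick x)).1 x.
    by apply: (epsilon_spec _ (fun s => A s /\ (sval s).1 x)); exists s.
  by case: (Atot _ _ As As') => [/(_ x hx) [] | /(_ x hx') []].
have common s1 s2 : A s1 -> A s2 -> exists2 s, A s & pder_le s1 s /\ pder_le s2 s.
  move=> A1 A2; have := pder_le_refl.
  by case: (Atot _ _ A1 A2) => le12 refl; [exists s2|exists s1].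
have common_dom x y : dom x -> dom y ->
    exists2 s, A s & [/\ (sval s).1 x, (sval s).1 y & extends_base (sval s)].
  move=> [s1 A1 h1] [s2 A2 h2]; have [s As [l1 l2]] := common _ _ A1 A2.
  by exists s => //; split; [case: (l1 x h1)|case: (l2 y h2)|apply: svalP].
have gu : extends_base (dom, Du).
  split.
  - split.
    + by exists s0 => //; case: (svalP s0) => -[].
    + move=> x y /common_dom /[apply] -[s As [hx hy [sR _ _]]].
      by exists s => //; apply: subringB.
    + move=> x y /common_dom /[apply] -[s As [hx hy [sR _ _]]].
      by exists s => //; apply: subringM.
  - split=> x y /common_dom /[apply] -[s As [hx hy [sR [dA dM] _]]] /=.
    + by rewrite !(DuE s) //; [apply: dA|apply: subringD].
    + by rewrite !(DuE s) //; [apply: dM|apply: subringM].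
  - move=> x hx; case: (svalP s0) => _ _ /(_ x hx) [h1 h2].
    by split; [exists s0|rewrite /= (DuE s0)].
by exists (exist _ _ gu) => s As x hx /=; split; [exists s|apply: DuE].
Qed.

Hypothesis char0 : [pchar F] =i pred0.
Hypotheses (sR0 : is_subring R0) (dD0 : derivation_on R0 D0).

(* A maximal partial derivation is defined on a subfield (by [fractions])
   which contains every element (by [derivation_algebraic_value] and
   [derivation_adjoin]). *)
Theorem derivation_extend : exists D : F -> F,
  [/\ forall x y, D (x + y) = D x + D y,
      forall x y, D (x * y) = x * D y + y * D x
    & forall x, R0 x -> D x = D0 x].
Proof.
have base : extends_base (R0, D0) by split=> // x.
have [t tmax] : exists t, premaximal (fun s t => `[< pder_le s t >]) t.
  apply: (ZL_preorder (exist _ _ base)) => [s|r s u|A Atot].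
  - exact/asboolP/pder_le_refl.
  - by move=> /asboolP rs /asboolP su; apply/asboolP; apply: pder_le_trans rs su.
  have [[s0 As0]|A0] := pselect (exists s, A s); last first.
    by exists (exist _ _ base) => s As; case: A0; exists s.
  have [|u hu] := pder_chain_ub As0; last by exists u => s /hu /asboolP.
  by move=> s1 s2 A1 A2; case: (Atot _ _ A1 A2) => /asboolP; [left|right].
case: t tmax => -[R D] [/= sR dD base_t] tmax.
have maximal R' D' : is_subring R' -> derivation_on R' D' -> extends R D R' D' ->
    forall x, R' x -> R x.
  move=> sR' dD' le x hx.
  have gp : extends_base (R', D').
    by split=> // y /base_t [/le [? e] <-].
  by have /asboolP := tmax (exist _ _ gp) (asboolT le) => /(_ x hx) [].
have R_inv x : R x -> x != 0 -> R x^-1.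
  have [D' dD' le] := derivation_fractions sR dD.
  by move=> hx x0; apply: maximal (fractions_subring sR) dD' le _ (fractions_inv sR hx x0).
have R_all b : R b.
  have [v hv] := derivation_algebraic_value sR dD char0 b R_inv.
  have [D' dD' [le _]] := derivation_adjoin sR dD hv.
  exact: maximal (adjoin_subring sR b) dD' le _ (adjoin_self sR b).
exists D; split.
- by move=> x y; apply: (derD dD).
- by move=> x y; apply: (derM dD).
- by move=> x /base_t [].
Qed.

End ExtensionTheorem.

End PartialDerivations.

Section BivariatePolynomials.
Variable K : fieldType.

(* [G : {poly {poly K}}] is a polynomial in z with coefficients in K[y]. *)
Definition ev2 (G : {poly {poly K}}) (y z : K) := (map_poly (horner_eval y) G).[z].

Definition pt2 (a b : K) : 'I_2 -> K := [ffun i : 'I_2 => if i == ord0 then a else b].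

Definition mpoly_of2 (G : {poly {poly K}}) : {mpoly K[2]} :=
  (map_poly (fun q : {poly K} => (map_poly (@mpolyC 2 K) q).['X_ord0]) G).['X_ord_max].

Lemma mpoly_of2E G a b : (mpoly_of2 G).@[pt2 a b] = ev2 G a b.
Proof.
rewrite /mpoly_of2 -horner_map /= mevalXU /pt2 ffunE /=.
rewrite -map_poly_comp_id0 ?meval0 // /ev2; congr (_.[_]); apply: eq_map_poly => q /=.
rewrite -horner_map /= mevalXU ffunE /= -map_poly_comp_id0 ?meval0 //.
by rewrite (eq_map_poly (g := id)) ?map_poly_id // => x /=; apply: mevalC.
Qed.

Lemma ev2_vanish_eq0 G : [pchar K] =i pred0 -> (forall y z, ev2 G y z = 0) -> G = 0.
Proof.
move=> char0 G0; apply/polyP => i; rewrite coef0; apply: poly_vanish_eq0 => // y.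
have /(congr1 (fun q : {poly K} => q`_i)) := poly_vanish_eq0 char0 (G0 y).
by rewrite coef_map coef0.
Qed.

Lemma zariski_dense2_ev2 (Gam : K -> K -> Prop) : [pchar K] =i pred0 ->
  zariski_dense2 Gam -> forall G, G != 0 -> exists y z, Gam y z /\ ev2 G y z != 0.
Proof.
move=> char0 dense G G0; have P0 : mpoly_of2 G != 0.
  apply: contra_neq G0 => P0; apply: ev2_vanish_eq0 => // y z.
  by rewrite -mpoly_of2E P0 meval0.
by have [y [z [Gyz nz]]] := dense _ P0; exists y, z; rewrite -mpoly_of2E.
Qed.

End BivariatePolynomials.

Lemma characters_independent (X : Type) (add : X -> X -> X) (x0 : X)
    (K : fieldType) (J : eqType) (chi : J -> X -> K) :
  (forall m x y, chi m (add x y) = chi m x * chi m y) -> (forall m, chi m x0 = 1) ->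
  (forall m m', m != m' -> exists y, chi m y != chi m' y) ->
  forall (s : seq J) (a : J -> K), uniq s ->
  (forall x, \sum_(m <- s) a m * chi m x = 0) -> forall m, m \in s -> a m = 0.
Proof.
move=> chiD chi0 chi_inj; elim=> [//|m0 s IH] a /= /andP [m0s us] rel.
have relm0 x : \sum_(m <- s) a m * chi m x = - (a m0 * chi m0 x).
  by apply/eqP; rewrite -addr_eq0 addrC; move: (rel x); rewrite big_cons => ->.
have a_s m : m \in s -> a m = 0.
  move=> ms; have [y chi_y] : exists y, chi m y != chi m0 y.
    by apply: chi_inj; apply: contraNneq m0s => <-.
  pose a' m := a m * (chi m y - chi m0 y).
  have rel' x : \sum_(m <- s) a' m * chi m x = 0.
    rewrite (eq_bigr (fun m => a m * chi m (add x y) - chi m0 y * (a m * chi m x))).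
      by rewrite sumrB -mulr_sumr !relm0 chiD; ring.
    by move=> m' _; rewrite /a' chiD; ring.
  by have /eqP := IH a' us rel' m ms; rewrite mulf_eq0 subr_eq0 (negbTE chi_y) orbF => /eqP.
move=> m; rewrite inE => /predU1P [->|]; last exact: a_s.
have := relm0 x0; rewrite big_seq big1 => [|m' /a_s ->]; last by rewrite mul0r.
by rewrite chi0 mulr1 => /esym/eqP; rewrite oppr_eq0 => /eqP.
Qed.

Section SurjectiveImpliesDense.
Variables (K : fieldType) (E d : K -> K) (c : K).
Hypothesis char0 : [pchar K] =i pred0.
Hypothesis ED : forall x y, E (x + y) = E x * E y.
Hypotheses (dD : forall x y, d (x + y) = d x + d y)
           (dM : forall x y, d (x * y) = x * d y + y * d x).
Hypothesis surj : forall a b, exists x, (d (E x), d (E (c * x))) = (a, b).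

Lemma derivation_setT : derivation_on setT d.
Proof. by split=> x y _ _; [apply: dD|apply: dM]. Qed.

Lemma der_exp u n : u * d (u ^+ n) = (u ^+ n * d u) *+ n.
Proof.
elim: n => [|n IH]; first by rewrite expr0 (der1 (subringT K) derivation_setT) mulr0.
by rewrite exprS dM mulrDr IH mulrnAr -mulrnAl mulrSr; ring.
Qed.

Lemma der_monomial u w i j : u * w * d (u ^+ i * w ^+ j) =
  (u ^+ i * w ^+ j * w * d u) *+ i + (u ^+ i * w ^+ j * u * d w) *+ j.
Proof.
have e1 : u * w * (u ^+ i * d (w ^+ j)) = u ^+ i * u * (w * d (w ^+ j)) by ring.
have e2 : u * w * (w ^+ j * d (u ^+ i)) = w ^+ j * w * (u * d (u ^+ i)) by ring.
rewrite dM mulrDr e1 e2 !der_exp !mulrnAr addrC.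
by congr (_ *+ _ + _ *+ _); ring.
Qed.

Lemma exp0 : E 0 = 1.
Proof.
have [x [dEx _]] := surj 1 0.
have /eqP : E 0 * (E 0 - 1) = 0 by rewrite mulrBr mulr1 -ED addr0 subrr.
rewrite mulf_eq0 subr_eq0 => /orP [/eqP E00|/eqP //].
move: dEx; rewrite -[x]addr0 ED E00 mulr0 (der0 (subringT K) derivation_setT).
by move=> /eqP; rewrite eq_sym oner_eq0.
Qed.

Lemma exp_neq0 x : E x != 0.
Proof.
by apply: contra_eq_neq (ED x (- x)) => Ex0; rewrite subrr exp0 Ex0 mul0r oner_neq0.
Qed.

Definition exp_char (m : 'X_{1..2}) x := E x ^+ m ord0 * E (c * x) ^+ m ord_max.

Lemma exp_charD m x y : exp_char m (x + y) = exp_char m x * exp_char m y.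
Proof. by rewrite /exp_char mulrDr !ED !exprMn; ring. Qed.

Lemma exp_char0 m : exp_char m 0 = 1.
Proof. by rewrite /exp_char mulr0 exp0 !expr1n mulr1. Qed.

(* The logarithmic derivative of exp_char m at a point x where
   (d (E x), d (E (c x))) = (1, 0), resp. (0, 1), recovers m ord0, resp. m ord_max. *)
Lemma exp_char_inj m m' : m != m' -> exists y, exp_char m y != exp_char m' y.
Proof.
move=> /eqP mm'; apply: contrapT => chi_eq; apply: mm'.
have {}chi_eq : exp_char m = exp_char m'.
  by apply/funext => y; apply/eqP; apply: contrapT => /negP ne; apply: chi_eq; exists y.
have log_der x m0 : E x * E (c * x) * d (exp_char m0 x) =
    (exp_char m0 x * E (c * x) * d (E x)) *+ m0 ord0
    + (exp_char m0 x * E x * d (E (c * x))) *+ m0 ord_max.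
  exact: der_monomial.
have chi_neq0 x : exp_char m x != 0 by rewrite mulf_neq0 ?expf_neq0 ?exp_neq0.
have [x1 [d1 d1']] := surj 1 0; have [x2 [d2 d2']] := surj 0 1.
have e0 : m ord0 = m' ord0.
  have := log_der x1 m'; rewrite -chi_eq log_der d1 d1' !mulr1 !mulr0 !mul0rn !addr0.
  exact: mulrn_inj_pchar0 char0 (mulf_neq0 (chi_neq0 x1) (exp_neq0 _)).
have e1 : m ord_max = m' ord_max.
  have := log_der x2 m'; rewrite -chi_eq log_der d2 d2' !mulr1 !mulr0 !mul0rn !add0r.
  exact: mulrn_inj_pchar0 char0 (mulf_neq0 (chi_neq0 x2) (exp_neq0 _)).
apply/mnmP => -[[|[|k]] hk] //.
- by rewrite (_ : Ordinal hk = ord0) //; apply: val_inj.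
- by rewrite (_ : Ordinal hk = ord_max) //; apply: val_inj.
Qed.

Lemma surj_dense : zariski_dense2 (fun y z => exists x, y = E x /\ z = E (c * x)).
Proof.
move=> P P0; apply: contrapT => none.
have rel x : \sum_(m <- msupp P) P@_m * exp_char m x = 0.
  have P_Gamma : P.@[pt2 (E x) (E (c * x))] = 0.
    by apply: contrapT => /eqP nz; apply: none; exists (E x), (E (c * x)); split=> //; exists x.
  apply: etrans P_Gamma; rewrite mevalE; apply: eq_bigr => m _; congr (_ * _).
  rewrite /exp_char big_ord_recr big_ord1 /pt2 !ffunE /=.
  by rewrite (_ : widen_ord _ _ = ord0) //; apply: val_inj.
have [m m_supp] : exists m, m \in msupp P.
  by case: (msupp P) (msupp_eq0 P) => [|m s]; [rewrite (negbTE P0)|exists m; apply: mem_head].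
have := characters_independent exp_charD exp_char0 exp_char_inj (msupp_uniq P) rel m_supp.
by move: m_supp; rewrite mcoeff_msupp => /eqP.
Qed.

End SurjectiveImpliesDense.

Definition supersets_filter {J : eqType} : set_system (seq J) :=
  fun X => exists s : seq J, forall t, {subset s <= t} -> X t.

Lemma supersets_filter_proper (J : eqType) : ProperFilter (@supersets_filter J).
Proof.
apply: Build_ProperFilter; first by move=> [s hs]; apply: (hs s).
apply: Build_Filter.
- by exists [::].
- move=> X Y [s1 h1] [s2 h2]; exists (s1 ++ s2) => t st; split.
    by apply: h1 => x xs1; apply: st; rewrite mem_cat xs1.
  by apply: h2 => x xs2; apply: st; rewrite mem_cat xs2 orbT.
- by move=> X Y XY [s hs]; exists s => t st; apply: XY; apply: hs.
Qed.

Section DenseImpliesSurjective.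
Variables (S : sig) (T : lform S -> Prop) (Kd : dstruc S) (c : scar (dbase Kd)).
Hypothesis HT0 : forall M : struc S, models T M -> [pchar (scar M)] =i pred0.
Hypothesis Hec : ec_model T Kd.
Local Notation M := (dbase Kd).
Local Notation K := (scar M).
Local Notation E := (sE M).
Local Notation d := (dder Kd).
Hypothesis dense : zariski_dense2 (fun y z => exists x, y = E x /\ z = E (c * x)).

Lemma ec_models : models T M. Proof. by case: Hec => -[]. Qed.
Lemma ec_char0 : [pchar K] =i pred0. Proof. exact: HT0 ec_models. Qed.
Lemma ec_derivation : is_derivation Kd. Proof. by case: Hec => -[]. Qed.

Definition avoids (s : seq {poly {poly K}}) (x : K) :=
  forall G, G \in s -> G != 0 -> ev2 G (E x) (E (c * x)) != 0.

Definition generic_seq s : K := epsilon (inhabits 0) (avoids s).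

Lemma generic_seqP s : avoids s (generic_seq s).
Proof.
apply: epsilon_spec; pose P := \prod_(G <- s | G != 0) G.
have P0 : P != 0 by rewrite prodf_seq_neq0; apply/allP => G _; apply/implyP.
have [_ [_ [[x [-> ->]] Px]]] := zariski_dense2_ev2 ec_char0 dense P0.
exists x => G Gs G0; move: Px; rewrite /ev2 rmorph_prod horner_prod.
by rewrite prodf_seq_neq0 => /allP /(_ G Gs); rewrite G0.
Qed.

Section GenericExtension.
Variable U : set_system (seq {poly {poly K}}).
Context {HU : UltraFilter U}.
Hypothesis U_supersets : (supersets_filter `<=` U)%classic.
Local Notation UP := (ultrapower K HU).
Local Notation UM := (@ultrapower_struc S M _ U HU).

Definition cst (k : K) : UP := cls (fun _ => k).
Definition genE : UP := cls (fun s => E (generic_seq s)).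
Definition genEc : UP := cls (fun s => E (c * generic_seq s)).

Definition at_generic (G : {poly {poly K}}) : UP :=
  (map_poly (fun q => (map_poly cst q).[genE]) G).[genEc].

Lemma at_genericE G :
  at_generic G = cls (fun s => ev2 G (E (generic_seq s)) (E (c * generic_seq s))).
Proof.
have inner q : (map_poly cst q).[genE] = cls (fun s => q.[E (generic_seq s)]).
  rewrite /cst (cls_horner (fun a _ => a)); congr cls; apply/funext => s.
  by rewrite map_poly_id.
by rewrite /at_generic (eq_map_poly inner) (cls_horner (fun q s => q.[E (generic_seq s)])).
Qed.

(* Almost every index s contains G, and generic_seq s avoids the zeros of G. *)
Lemma generic_independent G : at_generic G = 0 -> G = 0.
Proof.
rewrite at_genericE -cls0 => /cls_eqP G_ev; apply: contrapT => /eqP G0.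
have G_in : U (fun s => G \in s).
  by apply: U_supersets; exists [:: G] => t; apply; apply: mem_head.
apply: (filter_not_empty U); apply: filterS (filterI G_ev G_in) => s [ev Gs].
by have := generic_seqP Gs G0; rewrite ev eqxx.
Qed.

Definition consts : set UP := fun y => exists k, y = cst k.

Lemma cstD k l : cst (k + l) = cst k + cst l.
Proof. exact: (clsD (fun _ => k) (fun _ => l)). Qed.
Lemma cstB k l : cst (k - l) = cst k - cst l.
Proof. by rewrite cstD; congr (_ + _); apply: (clsN (fun _ => l)). Qed.
Lemma cstM k l : cst (k * l) = cst k * cst l.
Proof. exact: (clsM (fun _ => k) (fun _ => l)). Qed.

Lemma consts_subring : is_subring consts.
Proof.
split; first by exists 1.
- by move=> _ _ [k ->] [l ->]; exists (k - l); rewrite cstB.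
- by move=> _ _ [k ->] [l ->]; exists (k * l); rewrite cstM.
Qed.

Definition cst_der (y : UP) : UP := cst (d (epsilon (inhabits 0) (fun k => y = cst k))).

Lemma cst_derE k : cst_der (cst k) = cst (d k).
Proof.
rewrite /cst_der; congr (cst (d _)); apply: cls_const_inj; symmetry.
by apply: (epsilon_spec (inhabits 0) (fun l => cst k = cst l)); exists k.
Qed.

Lemma cst_derivation : derivation_on consts cst_der.
Proof.
have [dD dM] := ec_derivation.
split=> _ _ [k ->] [l ->].
- by rewrite -cstD !cst_derE dD cstD.
- by rewrite -cstM !cst_derE dM cstD !cstM.
Qed.

Lemma consts_independent g : coefs_in consts g -> g.[genE] = 0 -> g = 0.
Proof.
move=> /(poly_lift (f := cst))-[//|g0 ->] g_root.
have F0 : (map_poly cst 0).[genE] = 0 by rewrite map_poly0 horner0.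
have : at_generic g0%:P = 0 by rewrite /at_generic map_polyC_id0 // hornerC g_root.
by move/generic_independent/eqP; rewrite polyC_eq0 => /eqP ->; rewrite map_poly0.
Qed.

Lemma adjoin_independent g : coefs_in (adjoin consts genE) g -> g.[genEc] = 0 -> g = 0.
Proof.
have lift_coef i : adjoin consts genE g`_i -> exists q, g`_i = (map_poly cst q).[genE].
  by case=> r /(poly_lift (f := cst))-[//|q ->] ->; exists q.
have F0 : (map_poly cst 0).[genE] = 0 by rewrite map_poly0 horner0.
move=> /(fun h i => lift_coef i (h i)) /(poly_lift F0) [G ->] g_root.
by rewrite (generic_independent g_root) map_poly0.
Qed.

Lemma ultrapower_char0 : [pchar UP] =i pred0.
Proof. exact: HT0 (ultrapower_models (U := U) ec_models). Qed.

Lemma ultrapower_derivation a b : exists D : UP -> UP,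
  [/\ forall x y, D (x + y) = D x + D y,
      forall x y, D (x * y) = x * D y + y * D x,
      forall k, D (cst k) = cst (d k), D genE = cst a & D genEc = cst b].
Proof.
have sR0 := consts_subring; have sR1 := adjoin_subring sR0 genE.
have [D1 dD1 [le1 D1u]] : exists2 D1, derivation_on (adjoin consts genE) D1 &
    extends consts cst_der (adjoin consts genE) D1 /\ D1 genE = cst a.
  apply: (derivation_adjoin sR0 cst_derivation) => g Rg /(consts_independent Rg) ->.
  exact: (der_ext0 sR0 cst_derivation).
have [D2 dD2 [le2 D2w]] : exists2 D2, derivation_on (adjoin (adjoin consts genE) genEc) D2 &
    extends (adjoin consts genE) D1 (adjoin (adjoin consts genE) genEc) D2 /\ D2 genEc = cst b.
  apply: (derivation_adjoin sR1 dD1) => g Rg /(adjoin_independent Rg) ->.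
  exact: (der_ext0 sR1 dD1).
have [D [DD DM DE]] := derivation_extend ultrapower_char0 (adjoin_subring sR1 genEc) dD2.
have D_ext1 y : adjoin consts genE y -> D y = D1 y by move=> /le2 [/DE -> ->].
exists D; split=> //.
- by move=> k; have [/D_ext1 -> ->] := le1 (cst k) (ex_intro _ k erefl); apply: cst_derE.
- by rewrite D_ext1 ?D1u //; apply: adjoin_self.
- by rewrite DE ?D2w //; apply: adjoin_self.
Qed.

Lemma cst_embedding D : (forall k, D (cst k) = cst (d k)) ->
  lmd_embedding (M := Kd) (B := @DStruc S UM D) cst.
Proof.
move=> Dcst; split; first exact: cstD.
split; first exact: cstM.
split; first by move=> x; apply: (clsN (fun _ => x)).
do 2!split=> //.
split; first by move=> x; rewrite /cst ultrapower_sE.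
split; first by move=> f a; rewrite /cst (ultrapower_sF (fun k _ => a k)).
by split=> // phi v; apply: los_diagonal.
Qed.

(* In the extension, the generic point xi = [generic_seq] solves
   d (E xi) = a, d (E (c xi)) = b; existential closedness pulls a solution back. *)
Lemma ec_solution a b : exists x, d (E x) = a /\ d (E (c * x)) = b.
Proof.
have [D [DD DM Dcst Du Dw]] := ultrapower_derivation a b.
pose B := @DStruc S UM D.
have modB : models_TMd T B by split; [apply: ultrapower_models ec_models|split].
pose psi := QAnd (QEq (DDer (DExp (DVar S 0))) (DVar S 1))
                 (QEq (DDer (DExp (DMul (DVar S 2) (DVar S 0)))) (DVar S 3)).
pose v j : K := if j == 1%N then a else if j == 2%N then c else b.
have [w [wv [/= w1 w2]]] : exists w : nat -> K,
    (forall i, i \notin [:: 0%N] -> w i = v i) /\ qsat (M := Kd) w psi.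
  apply: Hec.2; exists B, cst; split=> //; split; first exact: cst_embedding.
  exists (fun j => if j == 0%N then cls generic_seq else cst (v j)); split.
    by move=> i; rewrite inE => /negbTE ->.
  split.
    by change (D (sE UM (cls generic_seq)) = cst a); rewrite ultrapower_sE Du.
  change (D (sE UM (cst c * cls generic_seq)) = cst b).
  by rewrite -(clsM (fun _ => c)) ultrapower_sE Dw.
by exists (w 0%N); move: w1 w2; rewrite (wv 1%N) // (wv 2%N) // (wv 3%N).
Qed.

End GenericExtension.

Lemma dense_surj a b : exists x, d (E x) = a /\ d (E (c * x)) = b.
Proof.
have [U [HU U_supersets]] := ultraFilterLemma (supersets_filter_proper {poly {poly K}}).
exact: ec_solution U_supersets a b.
Qed.

End DenseImpliesSurjective.

Theorem corollary2p4 (S : sig) (T : lform S -> Prop)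
  (* T expands the theory of fields of characteristic 0 *)
  (HT0 : forall M : struc S, models T M -> [pchar (scar M)] =i pred0)
  (* T proves E(x+y) = E(x) E(y) *)
  (HTE : forall M : struc S, models T M ->
           forall x y : scar M, sE M (x + y) = sE M x * sE M y)
  (* T proves exists z, E(z) <> 1 *)
  (HTz : forall M : struc S, models T M -> exists z : scar M, sE M z != 1)
  (Kd : dstruc S) (Hec : ec_model T Kd) (c : scar (dbase Kd)) :
  let E := sE (dbase Kd) in
  let d := dder Kd in
  (forall a b : scar (dbase Kd),
      exists x, (d (E x), d (E (c * x))) = (a, b))
  <-> zariski_dense2 (fun y z => exists x, y = E x /\ z = E (c * x)).
Proof.
move=> E d; have [dD dM] := ec_derivation Hec.
split=> [surj|dense a b].
  exact: surj_dense (ec_char0 HT0 Hec) (HTE _ (ec_models Hec)) dD dM surj.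
by have [x [e1 e2]] := dense_surj HT0 Hec dense a b; exists x; rewrite /d /E e1 e2.
Qed.
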